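(* Let $\mathcal{M}=(\mathcal{V}',\mathcal{E}')$ be a finite graph with shortest-path distance $d_{\mathcal{M}}$, and let $d,\ell\ge1$ be integers. Let $A_1,\dots,A_\ell\in\mathbb{R}^{|\mathcal{V}'|d\times|\mathcal{V}'|d}$ be block matrices with $d\times d$ blocks $(A_i)_{u,q}$ indexed by $u,q\in\mathcal{V}'$, and suppose there exist $C_i\ge0$ and $0\le\lambda<1$ such that $\|(A_i)_{u,q}\|\le C_i\lambda^{d_{\mathcal{M}}(u,q)}$ for all $u,q\in\mathcal{V}'$ and all $i$. Choose $\delta>0$ with $\lambda'=\lambda+\delta<1$, and suppose \[ \tilde a:=\sum_{k=0}^\infty\Big(\frac{\lambda}{\lambda'}\Big)^k\sup_{u\in\mathcal{V}'}|\partial N_u^k|<\infty. \] Then for all $u,v\in\mathcal{V}'$, \[ \Big\|\Big(\prod_{i=1}^\ell A_i\Big)_{u,v}\Big\|\le C'(\lambda')^{d_{\mathcal{M}}(u,v)},\qquad C'=\tilde a^{\,\ell}\prod_{i=1}^\ell C_i. \]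
   Context: $\|\cdot\|$ is the induced 2-norm on matrices. $N_u^k=\{q\in\mathcal{V}':d_{\mathcal{M}}(u,q)\le k\}$ and $\partial N_u^k=N_u^k\setminus N_u^{k-1}$ (with $N_u^{-1}=\emptyset$). *)

From HB Require Import structures.
From mathcomp Require Import all_boot all_order all_algebra.
From mathcomp Require Import all_classical all_reals all_analysis.
Set Implicit Arguments. Unset Strict Implicit. Unset Printing Implicit Defensive.
Import Order.TTheory GRing.Theory Num.Theory.
Local Open Scope ring_scope.

Definition walkb (V : finType) (e : rel V) (u v : V) (k : nat) : bool :=
  [exists p : k.-tuple V, path e u p && (last u p == v)].

(* Shortest-path distance: Some k with k minimal such that a walk of length *)
(* k exists (a shortest walk is a path, so has < #|V| edges); None (= +oo)  *)
(* if v is unreachable from u.                                              *)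
Definition gdist (V : finType) (e : rel V) (u v : V) : option nat :=
  let k := find (walkb e u v) (iota 0 #|V|) in
  if (k < #|V|)%N then Some k else None.

(* lam ^ d with the convention lam ^ (+oo) = 0 *)
Definition dpow (R : realType) (lam : R) (k : option nat) : R :=
  if k is Some j then lam ^+ j else 0.

Definition nbhd (V : finType) (e : rel V) (u : V) (k : nat) : {set V} :=
  [set q | if gdist e u q is Some j then (j <= k)%N else false].

Definition bnbhd (V : finType) (e : rel V) (u : V) (k : nat) : {set V} :=
  nbhd e u k :\: (if k is k'.+1 then nbhd e u k' else finset.set0).

Definition vnorm2 (R : realType) (d : nat) (x : 'cV[R]_d) : R :=
  Num.sqrt (\sum_(i < d) x i ord0 ^+ 2).

Definition opnorm2 (R : realType) (d : nat) (M : 'M[R]_d) : R :=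
  sup [set vnorm2 (M *m x) | x in [set x : 'cV[R]_d | vnorm2 x = 1]].

(* The d x d block (u,q) of a |V|d x |V|d matrix; row index of (u,a) is    *)
(* the mxvec_index of (enum_rank u, a), i.e. enum_rank u * d + a.           *)
Definition block (R : realType) (V : finType) (d : nat)
    (A : 'M[R]_(#|V| * d)) (u q : V) : 'M[R]_d :=
  \matrix_(a < d, b < d) A (mxvec_index (enum_rank u) a) (mxvec_index (enum_rank q) b).

Definition mxprod (R : realType) (n l : nat) (A : 'I_l -> 'M[R]_n) : 'M[R]_n :=
  \big[mulmx/1%:M]_(i < l) A i.

Definition aterm (R : realType) (V : finType) (e : rel V) (lam lam' : R)
    (k : nat) : R :=
  (lam / lam') ^+ k * (\max_(u : V) #|bnbhd e u k|)%:R.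

From HB Require Import structures.
From mathcomp Require Import all_boot all_order all_algebra.
From mathcomp Require Import all_classical all_reals all_analysis.
From mathcomp Require Import ring lra.
Import Order.TTheory GRing.Theory Num.Theory numFieldNormedType.Exports.
Local Open Scope ring_scope.
Set Implicit Arguments. Unset Strict Implicit.
Unset Printing Implicit Defensive.

(* Induction on l, peeling off the first factor: the (u,v) block of A_1 P is
   sum_q (A_1)_{u,q} P_{q,v}, whose q-th term is at most
   C_1 lam^{d(u,q)} K lam'^{d(q,v)}.  Writing lam^{d(u,q)} =
   (lam/lam')^{d(u,q)} lam'^{d(u,q)} and using lam' <= 1 with the triangle
   inequality d(u,v) <= d(u,q) + d(q,v), the sum is at most
   C_1 K lam'^{d(u,v)} sum_q (lam/lam')^{d(u,q)}, and grouping the q by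
   their distance to u bounds the last sum by the series a~. *)

Section GraphDistance.
Variables (V : finType) (e : rel V).
Implicit Types (u v q : V) (k : nat).

Lemma walkbP u v k :
  reflect (exists s : seq V, [/\ size s = k, path e u s & last u s = v])
          (walkb e u v k).
Proof.
apply: (iffP existsP) => [[p /andP[hp /eqP hl]]|[s [hs hp hl]]].
  by exists (val p); rewrite size_tuple.
have hs' : size s == k by rewrite hs.
by exists (Tuple hs') => /=; rewrite hp hl eqxx.
Qed.

Lemma walkb_cat u q v a b :
  walkb e u q a -> walkb e q v b -> walkb e u v (a + b).
Proof.
move=> /walkbP[s [hs hp hl]] /walkbP[t [ht hq hm]]; apply/walkbP.
by exists (s ++ t); rewrite size_cat hs ht cat_path last_cat hl hp hq.
Qed.

Lemma walkb_shorten u v k :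
  walkb e u v k -> exists2 j, (j < #|V|)%N & walkb e u v j.
Proof.
move=> /walkbP[s [_ hp hl]]; case: (shortenP hp) hl => s' hp' hu _ hl.
exists (size s'); last by apply/walkbP; exists s'.
by move/card_uniqP: hu => /= <-; apply: max_card.
Qed.

Lemma gdist_ltn u v k : gdist e u v = Some k -> (k < #|V|)%N.
Proof. by rewrite /gdist; case: ifP => // hk [<-]. Qed.

Lemma gdist_walkb u v k : gdist e u v = Some k -> walkb e u v k.
Proof.
rewrite /gdist; case: ifP => // hk [<-].
have := nth_find 0%N (s := iota 0 #|V|) (a := walkb e u v).
by rewrite nth_iota ?add0n //; apply; rewrite has_find size_iota.
Qed.

Lemma gdist_le_walkb u v k :
  walkb e u v k -> exists2 c, gdist e u v = Some c & (c <= k)%N.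
Proof.
move=> hw; have [j hj hwj] := walkb_shorten hw.
have find_le i : (i < #|V|)%N -> walkb e u v i ->
    (find (walkb e u v) (iota 0 #|V|) <= i)%N.
  move=> hi hwi; rewrite leqNgt; apply/negP => /(before_find 0%N).
  by rewrite nth_iota // add0n hwi.
have hc := find_le j hj hwj.
exists (find (walkb e u v) (iota 0 #|V|)).
  by rewrite /gdist (leq_ltn_trans hc hj).
have [hk|hk] := ltnP k #|V|; first exact: find_le.
exact: leq_trans hc (ltnW (leq_trans hj hk)).
Qed.

Lemma gdistxx u : gdist e u u = Some 0%N.
Proof.
have /gdist_le_walkb[c ->] : walkb e u u 0 by apply/walkbP; exists [::].
by rewrite leqn0 => /eqP ->.
Qed.

Lemma gdist_triangle u q v a b :
  gdist e u q = Some a -> gdist e q v = Some b ->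
  exists2 c, gdist e u v = Some c & (c <= a + b)%N.
Proof.
by move=> /gdist_walkb h1 /gdist_walkb h2; apply: gdist_le_walkb (walkb_cat h1 h2).
Qed.

Lemma in_bnbhd u k q : (q \in bnbhd e u k) = (gdist e u q == Some k).
Proof.
rewrite /bnbhd /nbhd; case: k => [|k]; rewrite !inE.
  by case: (gdist e u q) => // -[].
case: (gdist e u q) => // j; rewrite -ltnNge.
have -> : (Some j == Some k.+1) = (j == k.+1) by [].
by rewrite eqn_leq andbC.
Qed.

End GraphDistance.

Section EuclideanNorm.
Variables (R : realType) (d : nat).
Implicit Types (x y : 'cV[R]_d) (M N : 'M[R]_d).

Lemma vnorm2_ge0 x : 0 <= vnorm2 x.
Proof. exact: sqrtr_ge0. Qed.

Lemma vnorm2_sqr x : vnorm2 x ^+ 2 = \sum_i x i ord0 ^+ 2.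
Proof. by rewrite sqr_sqrtr // sumr_ge0 // => i _; rewrite sqr_ge0. Qed.

Lemma vnorm2_eq0 x : vnorm2 x = 0 -> x = 0.
Proof.
move=> h; have : \sum_i x i ord0 ^+ 2 = 0 by rewrite -vnorm2_sqr h expr0n.
move/psumr_eq0P => hx; apply/matrixP => i j; rewrite (ord1 j) mxE.
by apply/eqP; rewrite -sqrf_eq0; apply/eqP/hx => // k _; rewrite sqr_ge0.
Qed.

Lemma vnorm20 : vnorm2 (0 : 'cV[R]_d) = 0.
Proof. by rewrite /vnorm2 big1 ?sqrtr0 // => i _; rewrite mxE expr0n. Qed.

Lemma vnorm2Z a x : vnorm2 (a *: x) = `|a| * vnorm2 x.
Proof.
rewrite /vnorm2 (eq_bigr (fun i => a ^+ 2 * x i ord0 ^+ 2)); last first.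
  by move=> i _; rewrite mxE exprMn.
by rewrite -mulr_sumr sqrtrM ?sqr_ge0 // sqrtr_sqr.
Qed.

Lemma cauchy_schwarz_vnorm2 x y :
  \sum_i x i ord0 * y i ord0 <= vnorm2 x * vnorm2 y.
Proof.
have [/vnorm2_eq0 ->|a0] := eqVneq (vnorm2 x) 0.
  by rewrite big1 ?vnorm20 ?mul0r // => i _; rewrite mxE mul0r.
have [/vnorm2_eq0 ->|b0] := eqVneq (vnorm2 y) 0.
  by rewrite big1 ?vnorm20 ?mulr0 // => i _; rewrite mxE mulr0.
set a := vnorm2 x; set b := vnorm2 y; set S := \sum_i _.
have hab : 0 < 2 * a * b by rewrite !mulr_gt0 // lt0r ?a0 ?b0 vnorm2_ge0.
rewrite -(ler_pM2l hab) [X in _ <= X](_ : _ = 2 * a ^+ 2 * b ^+ 2); last by ring.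
(* termwise AM-GM: 2 a b x_i y_i <= b^2 x_i^2 + a^2 y_i^2 *)
have -> : 2 * a ^+ 2 * b ^+ 2 =
    \sum_i (x i ord0 ^+ 2 * b ^+ 2 + y i ord0 ^+ 2 * a ^+ 2).
  rewrite big_split /= -!mulr_suml -!vnorm2_sqr -/a -/b; ring.
rewrite /S mulr_sumr; apply: ler_sum => i _.
have := sqr_ge0 (x i ord0 * b - y i ord0 * a); nra.
Qed.

Lemma ler_vnorm2D x y : vnorm2 (x + y) <= vnorm2 x + vnorm2 y.
Proof.
rewrite -(ler_pXn2r (n := 2)) // ?nnegrE ?addr_ge0 ?vnorm2_ge0 //.
rewrite vnorm2_sqr (eq_bigr (fun i => x i ord0 ^+ 2 + y i ord0 ^+ 2
   + 2 * (x i ord0 * y i ord0))); last by move=> i _; rewrite mxE; ring.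
rewrite !big_split /= -mulr_sumr -!vnorm2_sqr.
have := cauchy_schwarz_vnorm2 x y; nra.
Qed.

Lemma ler_vnorm2_sum (I : finType) (F : I -> 'cV[R]_d) :
  vnorm2 (\sum_i F i) <= \sum_i vnorm2 (F i).
Proof.
elim/big_ind2: _ => [|a b c f h1 h2|//]; first by rewrite vnorm20.
by apply: le_trans (ler_vnorm2D _ _) _; apply: lerD.
Qed.

Lemma abs_coord_le_vnorm2 x j : `|x j ord0| <= vnorm2 x.
Proof.
rewrite -(ler_pXn2r (n := 2)) ?nnegrE ?vnorm2_ge0 // real_normK ?num_real //.
by rewrite vnorm2_sqr (bigD1 j) //= lerDl sumr_ge0 // => i _; rewrite sqr_ge0.
Qed.

Lemma opnorm2_bounded M :
  has_ubound [set vnorm2 (M *m x) | x in [set x : 'cV[R]_d | vnorm2 x = 1]].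
Proof.
exists (\sum_j vnorm2 (col j M)) => _ [x hx <-].
have -> : M *m x = \sum_j x j ord0 *: col j M.
  apply/matrixP => i k; rewrite (ord1 k) !mxE summxE.
  by apply: eq_bigr => j _; rewrite !mxE mulrC.
apply: le_trans (ler_vnorm2_sum _) _; apply: ler_sum => j _.
rewrite vnorm2Z ler_piMl ?vnorm2_ge0 // -hx; exact: abs_coord_le_vnorm2.
Qed.

Lemma ler_opnorm2 M x : vnorm2 x = 1 -> vnorm2 (M *m x) <= opnorm2 M.
Proof. by move=> hx; apply: (ub_le_sup (opnorm2_bounded M)); exists x. Qed.

Hypothesis hd : (0 < d)%N.

Let unit_vector : vnorm2 (delta_mx (Ordinal hd) ord0 : 'cV[R]_d) = 1.
Proof.
rewrite /vnorm2 (bigD1 (Ordinal hd)) //= big1 ?addr0 ?mxE ?eqxx ?expr1n ?sqrtr1 //.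
by move=> i /negPf hi; rewrite mxE hi expr0n.
Qed.

Lemma opnorm2_le M c :
  (forall x, vnorm2 x = 1 -> vnorm2 (M *m x) <= c) -> opnorm2 M <= c.
Proof.
move=> h; apply: ge_sup; last by move=> _ [x hx <-]; exact: h.
by exists (vnorm2 (M *m delta_mx (Ordinal hd) ord0)), (delta_mx (Ordinal hd) ord0).
Qed.

Lemma opnorm2_ge0 M : 0 <= opnorm2 M.
Proof. exact: le_trans (vnorm2_ge0 _) (ler_opnorm2 M unit_vector). Qed.

Lemma ler_opnorm2_mulmx M x : vnorm2 (M *m x) <= opnorm2 M * vnorm2 x.
Proof.
have [/vnorm2_eq0 ->|n0] := eqVneq (vnorm2 x) 0.
  by rewrite mulmx0 vnorm20 mulr0.
have hn : 0 < vnorm2 x by rewrite lt0r n0 vnorm2_ge0.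
have hy : vnorm2 ((vnorm2 x)^-1 *: x) = 1.
  by rewrite vnorm2Z ger0_norm ?invr_ge0 ?vnorm2_ge0 // mulVf.
have := ler_opnorm2 M hy.
by rewrite -scalemxAr vnorm2Z ger0_norm ?invr_ge0 ?vnorm2_ge0 // ler_pdivrMl // mulrC.
Qed.

Lemma ler_opnorm2_sum (I : finType) (F : I -> 'M[R]_d) :
  opnorm2 (\sum_i F i) <= \sum_i opnorm2 (F i).
Proof.
apply: opnorm2_le => x hx; rewrite mulmx_suml.
apply: le_trans (ler_vnorm2_sum _) _; apply: ler_sum => i _; exact: ler_opnorm2.
Qed.

Lemma ler_opnorm2_mul M N : opnorm2 (M *m N) <= opnorm2 M * opnorm2 N.
Proof.
apply: opnorm2_le => x hx; rewrite -mulmxA.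
apply: le_trans (ler_opnorm2_mulmx _ _) _.
by apply: ler_wpM2l; [exact: opnorm2_ge0 | exact: ler_opnorm2].
Qed.

Lemma opnorm2_scalar_le (a : R) : opnorm2 (a%:M : 'M[R]_d) <= `|a|.
Proof. by apply: opnorm2_le => x hx; rewrite mul_scalar_mx vnorm2Z hx mulr1. Qed.

End EuclideanNorm.

Section Blocks.
Variables (R : realType) (V : finType) (d : nat).

Lemma block_mulmx (M N : 'M[R]_(#|V| * d)) u v :
  block (M *m N) u v = \sum_q block M u q *m block N q v.
Proof.
apply/matrixP => a b; rewrite !mxE summxE.
rewrite (reindex (uncurry (@mxvec_index #|V| d))) /=; last exact: curry_mxvec_bij.
rewrite [RHS](reindex (@enum_val V predT)) /=; last first.
  by exists (@enum_rank V) => i _; [apply: enum_valK | apply: enum_rankK].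
under [RHS]eq_bigr do rewrite mxE; rewrite pair_bigA.
by apply: eq_bigr => -[i c] _; rewrite !mxE enum_valK.
Qed.

Lemma block1 (u v : V) :
  block (1%:M : 'M[R]_(#|V| * d)) u v = (u == v)%:R%:M.
Proof.
apply/matrixP => a b; rewrite !mxE /mxvec_index (inj_eq (@cast_ord_inj _ _ _)).
rewrite (inj_eq (@enum_rank_inj _)) xpair_eqE (inj_eq (@enum_rank_inj _)).
by case: (u == v); case: (a == b).
Qed.

End Blocks.

Lemma mxprod0 (R : realType) n (A : 'I_0 -> 'M[R]_n) : mxprod A = 1%:M.
Proof. exact: big_ord0. Qed.

Lemma mxprodS (R : realType) n l (A : 'I_l.+1 -> 'M[R]_n) :
  mxprod A = A ord0 *m mxprod (fun i : 'I_l => A (lift ord0 i)).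
Proof. exact: big_ord_recl. Qed.

Lemma dpow_ge0 (R : realType) (x : R) k : 0 <= x -> 0 <= dpow x k.
Proof. by case: k => //= j hx; rewrite exprn_ge0. Qed.

Lemma sum_dpow_gdist (R : realType) (V : finType) (e : rel V) (x : R) (u : V) :
  \sum_q dpow x (gdist e u q) = \sum_(k < #|V|) x ^+ k * #|bnbhd e u k|%:R.
Proof.
have dpow_sum q :
    dpow x (gdist e u q) = \sum_(k < #|V|) (q \in bnbhd e u k)%:R * x ^+ k.
  case h: (gdist e u q) => [j|] /=; last first.
    by rewrite big1 // => k _; rewrite in_bnbhd h mul0r.
  rewrite (bigD1 (Ordinal (gdist_ltn h))) //= in_bnbhd h eqxx mul1r.
  rewrite big1 ?addr0 // => k hk; rewrite in_bnbhd h.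
  have -> : (Some j == Some (k : nat)) = (j == k) by [].
  by rewrite eq_sym -(inj_eq val_inj) /= in hk; rewrite (negPf hk) mul0r.
under eq_bigr do rewrite dpow_sum.
rewrite exchange_big; apply: eq_bigr => k _.
rewrite -mulr_suml mulrC -natr_sum -sum1_card; congr (_ * _%:R).
by rewrite [RHS]big_mkcond; apply: eq_bigr => q _; case: (q \in _).
Qed.

Section BlockDecay.
Variables (R : realType) (V : finType) (e : rel V) (d : nat) (hd : (0 < d)%N).
Variables (lam lam' : R).
Hypotheses (hlam0 : 0 <= lam) (hlam'0 : 0 < lam') (hlam'1 : lam' <= 1).
Hypothesis hfin : cvgn (series (aterm e lam lam')).
Local Notation a_tilde := (limn (series (aterm e lam lam'))).

Let ratio_ge0 : 0 <= lam / lam'.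
Proof. by rewrite divr_ge0 // ltW. Qed.

Lemma series_aterm_le_limn n : series (aterm e lam lam') n <= a_tilde.
Proof.
apply: nondecreasing_cvgn_le => //.
apply: (nondecreasing_series (P := xpredT) (m := 0%N)) => k _ _.
by rewrite mulr_ge0 ?exprn_ge0.
Qed.

Lemma limn_series_aterm_ge0 : 0 <= a_tilde.
Proof. by apply: le_trans (series_aterm_le_limn 0); rewrite /series /= big_geq. Qed.

Lemma sum_dpow_gdist_le (u : V) : \sum_q dpow (lam / lam') (gdist e u q) <= a_tilde.
Proof.
rewrite sum_dpow_gdist; apply: le_trans (series_aterm_le_limn #|V|).
rewrite /series /= big_mkord; apply: ler_sum => k _.
rewrite ler_wpM2l ?exprn_ge0 // ler_nat; exact: leq_bigmax.
Qed.

Lemma dpow_gdist_split (u q v : V) :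
  dpow lam (gdist e u q) * dpow lam' (gdist e q v)
    <= dpow (lam / lam') (gdist e u q) * dpow lam' (gdist e u v).
Proof.
case h1: (gdist e u q) => [a|]; last by rewrite !mul0r.
case h2: (gdist e q v) => [b|]; last by rewrite /= mulr0 mulr_ge0 ?exprn_ge0 ?dpow_ge0 // ltW.
have [c -> hc] := gdist_triangle h1 h2; rewrite /=.
rewrite -{1}(divfK (lt0r_neq0 hlam'0) lam) exprMn -mulrA -exprD.
by rewrite ler_wpM2l ?exprn_ge0 // ler_wiXn2l // ltW.
Qed.

Lemma block_mxprod_decay l (A : 'I_l -> 'M[R]_(#|V| * d)) (C : 'I_l -> R) :
  (forall i, 0 <= C i) ->
  (forall i u q, opnorm2 (block (A i) u q) <= C i * dpow lam (gdist e u q)) ->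
  forall u v, opnorm2 (block (mxprod A) u v)
                <= a_tilde ^+ l * (\prod_(i < l) C i) * dpow lam' (gdist e u v).
Proof.
elim: l A C => [|l IH] A C hC hA u v.
  rewrite mxprod0 block1 big_ord0 !mul1r; apply: le_trans (opnorm2_scalar_le hd _) _.
  by have [->|_] := eqVneq u v; rewrite ?gdistxx ?normr1 ?normr0 ?dpow_ge0 // ltW.
have hP := IH _ _ (fun i => hC (lift ord0 i)) (fun i => hA (lift ord0 i)).
set K := a_tilde ^+ l * \prod_(i < l) C (lift ord0 i) in hP *.
have hK : 0 <= K by rewrite mulr_ge0 ?exprn_ge0 ?limn_series_aterm_ge0 ?prodr_ge0.
rewrite mxprodS block_mulmx; apply: le_trans (ler_opnorm2_sum hd _) _.
apply: le_trans (_ : \sum_q C ord0 * K * dpow lam' (gdist e u v)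
                              * dpow (lam / lam') (gdist e u q) <= _).
  apply: ler_sum => q _; apply: le_trans (ler_opnorm2_mul hd _ _) _.
  apply: le_trans (ler_pM (opnorm2_ge0 hd _) (opnorm2_ge0 hd _) (hA ord0 u q) (hP q v)) _.
  rewrite mulrACA -[leRHS]mulrA (mulrC (dpow lam' _)) ler_wpM2l ?(mulr_ge0 (hC ord0) hK) //.
  exact: dpow_gdist_split.
rewrite -mulr_sumr; apply: le_trans (ler_wpM2l _ (sum_dpow_gdist_le u)) _.
  by rewrite mulr_ge0 ?(mulr_ge0 (hC ord0) hK) ?dpow_ge0 // ltW.
by rewrite big_ord_recl exprS /K le_eqVlt; apply/orP; left; apply/eqP; ring.
Qed.

End BlockDecay.

Theorem lemmaC3 (R : realType) (V : finType) (e : rel V) (he : symmetric e)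
    (d l : nat) (hd : (0 < d)%N) (hl : (0 < l)%N)
    (A : 'I_l -> 'M[R]_(#|V| * d)) (C : 'I_l -> R) (lam delta : R)
    (hC : forall i, 0 <= C i) (hlam0 : 0 <= lam) (hlam1 : lam < 1)
    (hA : forall i u q, opnorm2 (block (A i) u q) <= C i * dpow lam (gdist e u q))
    (hdelta : 0 < delta) (hlam' : lam + delta < 1)
    (hfin : cvgn (series (aterm e lam (lam + delta)))) :
  forall u v : V,
    opnorm2 (block (mxprod A) u v) <=
      (limn (series (aterm e lam (lam + delta)))) ^+ l * (\prod_(i < l) C i)
        * dpow (lam + delta) (gdist e u v).
Proof.
by apply: block_mxprod_decay => //; lra.
Qed.
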